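(* Let $U\subseteq\mathbb{R}^4$ be open with coordinates $(x^1,x^2,x^3,x^4)$ and let $a,b,p,q,s$ be real constants with $a^2+b^2\neq0$. Consider the Lorentzian metric $$g=2\,dx^1dx^4+(dx^2)^2+(dx^3)^2+\Big(x^4\big(a(x^2)^2+b(x^3)^2\big)+p(x^2)^2+2qx^2x^3+s(x^3)^2\Big)(dx^4)^2$$ on $U$. Then for every real constant $\lambda$ (positive, zero or negative) there exists a smooth vector field $V$ on $U$ such that $\mathcal{L}_Vg+\varrho=\lambda g$. In particular $(U,g)$ is a shrinking, a steady and an expanding Ricci soliton.
   Context: $\mathcal{L}_V$ denotes the Lie derivative and $\varrho$ the Ricci tensor, $\varrho(Y,Z)=\operatorname{tr}(X\mapsto R(X,Z)Y)$ with $R(X,Y)=[\nabla_X,\nabla_Y]-\nabla_{[X,Y]}$. A Ricci soliton $(M,g,V,\lambda)$, i.e. $\mathcal{L}_Vg+\varrho=\lambda g$ with $\lambda\in\mathbb{R}$, is called shrinking, steady or expanding according as $\lambda>0$, $\lambda=0$ or $\lambda<0$. *)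

(* Points of R^4 are row vectors 'rV[R]_4;
   coordinate x^(k+1) of the paper is x ord0 (k : 'I_4). *)
From HB Require Import structures.
From mathcomp Require Import all_boot all_order all_algebra.
From mathcomp Require Import all_classical all_reals all_analysis.
Set Implicit Arguments. Unset Strict Implicit. Unset Printing Implicit Defensive.
Import Order.TTheory GRing.Theory Num.Theory.
Import numFieldNormedType.Exports.
Local Open Scope classical_set_scope.
Local Open Scope ring_scope.

Section Coord.
Variable R : realType.
Notation pt := 'rV[R]_4.

Definition coord (i : 'I_4) (x : pt) : R := x ord0 i.
Definition ebase (i : 'I_4) : pt := delta_mx ord0 i.

Definition pd (i : 'I_4) (f : pt -> R) : pt -> R := fun x => derive f x (ebase i).

Definition iter_pd (l : seq 'I_4) (f : pt -> R) : pt -> R := foldr pd f l.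

Definition smooth_on (U : set pt) (f : pt -> R) : Prop :=
  forall (l : seq 'I_4) (x : pt), U x ->
    {for x, continuous (iter_pd l f)} /\
    (forall i : 'I_4, derivable (iter_pd l f) x (ebase i)).

Definition tensor2 := 'I_4 -> 'I_4 -> pt -> R.
Definition vfield := 'I_4 -> pt -> R.

Definition ginv (g : tensor2) (i j : 'I_4) (x : pt) : R :=
  invmx (\matrix_(a < 4, b < 4) g a b x) i j.

(* Christoffel symbols Gamma^k_{ij} of the Levi-Civita connection:
   nabla_{d_i} d_j = sum_k Gamma^k_{ij} d_k *)
Definition christoffel (g : tensor2) (k i j : 'I_4) (x : pt) : R :=
  2^-1 * \sum_(l < 4) ginv g k l x *
           (pd i (g j l) x + pd j (g i l) x - pd l (g i j) x).

(* Curvature R(X,Y) = [nabla_X, nabla_Y] - nabla_[X,Y];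
   R(d_i, d_j) d_k = sum_l riem g l i j k d_l *)
Definition riem (g : tensor2) (l i j k : 'I_4) (x : pt) : R :=
  pd i (christoffel g l j k) x - pd j (christoffel g l i k) x
  + \sum_(m < 4) (christoffel g m j k x * christoffel g l i m x
                  - christoffel g m i k x * christoffel g l j m x).

(* Ricci tensor rho(Y,Z) = tr (X |-> R(X,Z)Y):
   rho_{jk} = rho(d_j, d_k) = sum_a (component a of R(d_a, d_k) d_j) *)
Definition ricci (g : tensor2) (j k : 'I_4) (x : pt) : R :=
  \sum_(a < 4) riem g a a k j x.

Definition lie_g (V : vfield) (g : tensor2) (i j : 'I_4) (x : pt) : R :=
  \sum_(k < 4) (V k x * pd k (g i j) x + g k j x * pd i (V k) x
                + g i k x * pd j (V k) x).

(* The metric of the theorem (indices 0..3 stand for 1..4):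
   g = 2 dx^1 dx^4 + (dx^2)^2 + (dx^3)^2 + H (dx^4)^2 *)
Definition Hfun (a b p q s : R) (x : pt) : R :=
  coord 3 x * (a * coord 1 x ^+ 2 + b * coord 2 x ^+ 2)
  + p * coord 1 x ^+ 2 + 2 * q * coord 1 x * coord 2 x + s * coord 2 x ^+ 2.

Definition gmet (a b p q s : R) : tensor2 := fun i j x =>
  if (val i == 0%N) && (val j == 3%N) then 1
  else if (val i == 3%N) && (val j == 0%N) then 1
  else if (val i == 1%N) && (val j == 1%N) then 1
  else if (val i == 2%N) && (val j == 2%N) then 1
  else if (val i == 3%N) && (val j == 3%N) then Hfun a b p q s x
  else 0.

End Coord.

(* The metric is a pp-wave in Brinkmann form with profile H, so its only
   nonzero Ricci component is rho_44 = -(1/2) (d_2^2 + d_3^2) H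
   = -((a + b) x^4 + p + s).  Since H is quadratic in (x^2, x^3), the field
   (lambda/2) (2 x^1, x^2, x^3, 0) is a homothety: its Lie derivative of g is
   lambda g.  Adding ((a + b)/4 (x^4)^2 + (p + s)/2 x^4) d_1 adds
   2 d_4 V^1 = (a + b) x^4 + p + s to the (4,4) entry and cancels the Ricci
   tensor.  All components of g, of its inverse and of V are polynomials, so
   the curvature identities are checked by symbolic computation on polynomial
   expressions, differentiated syntactically. *)
From Pilot Require Import Defs.
From HB Require Import structures.
From mathcomp Require Import all_boot all_order all_algebra.
From mathcomp Require Import all_classical all_reals all_analysis.
From mathcomp Require Import ring.
Set Implicit Arguments. Unset Strict Implicit. Unset Printing Implicit Defensive.
Import Order.TTheory GRing.Theory Num.Theory.
Import numFieldNormedType.Exports.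
Local Open Scope classical_set_scope.
Local Open Scope ring_scope.

(* Indices of the paper's coordinates x^1, ..., x^4, as closed terms so that
   symbolic expressions built from them reduce by computation. *)
Definition ix1 : 'I_4 := @Ordinal 4 0 isT.
Definition ix2 : 'I_4 := @Ordinal 4 1 isT.
Definition ix3 : 'I_4 := @Ordinal 4 2 isT.
Definition ix4 : 'I_4 := @Ordinal 4 3 isT.

Section PolynomialExpressions.
Variable R : realType.
Notation pt := 'rV[R]_4.

Inductive pexpr :=
  | PZero | POne | PConst of R | PCoord of 'I_4
  | PAdd of pexpr & pexpr | PMul of pexpr & pexpr | POpp of pexpr.

Fixpoint peval (e : pexpr) (x : pt) : R :=
  match e with
  | PZero => 0
  | POne => 1
  | PConst c => c
  | PCoord i => Defs.coord i x
  | PAdd e1 e2 => peval e1 x + peval e2 x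
  | PMul e1 e2 => peval e1 x * peval e2 x
  | POpp e1 => - peval e1 x
  end.

(* Constructors simplifying units, which keeps symbolic derivatives small. *)
Definition padd e1 e2 :=
  match e1, e2 with PZero, _ => e2 | _, PZero => e1 | _, _ => PAdd e1 e2 end.

Definition pmul e1 e2 :=
  match e1, e2 with
  | PZero, _ | _, PZero => PZero
  | POne, _ => e2
  | _, POne => e1
  | _, _ => PMul e1 e2
  end.

Definition popp e := if e is PZero then PZero else POpp e.

Lemma peval_padd e1 e2 x : peval (padd e1 e2) x = peval e1 x + peval e2 x.
Proof. by case: e1; case: e2 => /= *; rewrite ?add0r ?addr0. Qed.

Lemma peval_pmul e1 e2 x : peval (pmul e1 e2) x = peval e1 x * peval e2 x.
Proof. by case: e1; case: e2 => /= *; rewrite ?mul0r ?mulr0 ?mul1r ?mulr1. Qed.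

Lemma peval_popp e x : peval (popp e) x = - peval e x.
Proof. by case: e => /= *; rewrite ?oppr0. Qed.

Fixpoint pderiv (i : 'I_4) (e : pexpr) : pexpr :=
  match e with
  | PZero | POne | PConst _ => PZero
  | PCoord j => if eqn i j then POne else PZero
  | PAdd e1 e2 => padd (pderiv i e1) (pderiv i e2)
  | PMul e1 e2 => padd (pmul (pderiv i e1) e2) (pmul e1 (pderiv i e2))
  | POpp e1 => popp (pderiv i e1)
  end.

Lemma differentiable_peval e x : differentiable (peval e) x.
Proof.
elim: e => [| | c | i | e1 IH1 e2 IH2 | e1 IH1 e2 IH2 | e1 IH1] /=.
- exact: differentiable_cst.
- exact: differentiable_cst.
- exact: differentiable_cst.
- exact: differentiable_coord.
- exact: differentiableD.
- exact: differentiableM.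
- exact: differentiableN.
Qed.

Lemma derivable_peval e x v : derivable (peval e) x v.
Proof. exact/diff_derivable/differentiable_peval. Qed.

Lemma pd_coord (i j : 'I_4) (x : pt) : pd i (Defs.coord j) x = (eqn i j)%:R.
Proof.
have coord_linear : linear (Defs.coord (R:=R) j) by move=> k u v; rewrite /Defs.coord !mxE.
pose f : {linear pt -> R} :=
  HB.pack (Defs.coord j) (GRing.isLinear.Build _ _ _ _ _ coord_linear).
have f_cont : continuous f by exact: coord_continuous.
rewrite /pd (_ : Defs.coord j = f) // deriveE; last exact: linear_differentiable.
by rewrite diff_lin //= /Defs.coord /ebase mxE eq_sym.
Qed.

Lemma pd_peval i e : pd i (peval e) = peval (pderiv i e).
Proof.
apply/funext => x; elim: e => [| | c | j | e1 IH1 e2 IH2 | e1 IH1 e2 IH2 | e1 IH1] /=.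
- exact: derive_cst.
- exact: derive_cst.
- exact: derive_cst.
- by rewrite pd_coord; case: eqn.
- rewrite peval_padd -IH1 -IH2 /pd (_ : (fun _ => _) = peval e1 + peval e2) //.
  by rewrite deriveD //; apply: derivable_peval.
- rewrite peval_padd !peval_pmul -IH1 -IH2 /pd.
  rewrite (_ : (fun _ => _) = peval e1 * peval e2) // deriveM; try exact: derivable_peval.
  by rewrite /GRing.scale /= addrC mulrC [peval e1 x * _]mulrC.
- rewrite peval_popp -IH1 /pd (_ : (fun _ => _) = - peval e1) //.
  by rewrite deriveN //; apply: derivable_peval.
Qed.

Lemma smooth_on_peval (U : set pt) e : smooth_on U (peval e).
Proof.
move=> l x _.
have -> : iter_pd l (peval e) = peval (foldr pderiv e l).
  by elim: l => //= i l ->; rewrite pd_peval.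
split; last by move=> i; apply: derivable_peval.
exact/differentiable_continuous/differentiable_peval.
Qed.

Definition psum4 (F : 'I_4 -> pexpr) :=
  padd (padd (padd (F ix1) (F ix2)) (F ix3)) (F ix4).

Lemma peval_psum4 F x : peval (psum4 F) x = \sum_(l < 4) peval (F l) x.
Proof.
rewrite /psum4 !peval_padd !big_ord_recr big_ord0 /= add0r.
by congr (_ + _ + _ + _); congr (peval (F _) x); apply/val_inj.
Qed.

End PolynomialExpressions.

Arguments PZero {R}.
Arguments POne {R}.
Arguments PCoord {R}.

Section PolynomialMetric.
Variables (R : realType) (g : tensor2 R) (G Ginv : 'I_4 -> 'I_4 -> pexpr R).
Hypothesis gE : forall i j, g i j = peval (G i j).
Hypothesis mul_G_Ginv : forall x : 'rV[R]_4,
  \matrix_(i, j) peval (G i j) x *m \matrix_(i, j) peval (Ginv i j) x = 1%:M.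

Lemma ginv_peval k l x : ginv g k l x = peval (Ginv k l) x.
Proof.
rewrite /ginv.
set A := \matrix_(i, j) g i j x.
set B := \matrix_(i, j) peval (Ginv i j) x.
have AB : A *m B = 1%:M.
  by rewrite -(mul_G_Ginv x); congr (_ *m _); apply/matrixP => i j; rewrite !mxE gE.
have A_unit : A \in unitmx := (mulmx1_unit AB).1.
suff -> : invmx A = B by rewrite mxE.
by rewrite -[invmx A]mulmx1 -AB mulmxA mulVmx // mul1mx.
Qed.

Definition pchristoffel k i j :=
  pmul (PConst 2^-1) (psum4 (fun l => pmul (Ginv k l)
    (padd (padd (pderiv i (G j l)) (pderiv j (G i l))) (popp (pderiv l (G i j)))))).

Lemma christoffel_peval k i j : christoffel g k i j = peval (pchristoffel k i j).
Proof.
apply/funext => x; rewrite /christoffel /pchristoffel peval_pmul peval_psum4 /=; congr (_ * _).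
apply: eq_bigr => l _.
by rewrite ginv_peval peval_pmul !peval_padd peval_popp !gE !pd_peval.
Qed.

Definition priem l i j k :=
  padd (padd (pderiv i (pchristoffel l j k)) (popp (pderiv j (pchristoffel l i k))))
    (psum4 (fun m => padd (pmul (pchristoffel m j k) (pchristoffel l i m))
                          (popp (pmul (pchristoffel m i k) (pchristoffel l j m))))).

Lemma riem_peval l i j k x : riem g l i j k x = peval (priem l i j k) x.
Proof.
rewrite /riem /priem peval_padd peval_psum4 !peval_padd peval_popp !christoffel_peval !pd_peval.
congr (_ + _); apply: eq_bigr => m _.
by rewrite peval_padd peval_popp !(peval_pmul (pchristoffel _ _ _)) !christoffel_peval.
Qed.

Definition pricci j k := psum4 (fun c => priem c c k j).

Lemma ricci_peval j k x : ricci g j k x = peval (pricci j k) x.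
Proof. by rewrite /ricci /pricci peval_psum4; apply: eq_bigr => c _; rewrite riem_peval. Qed.

Variable V : 'I_4 -> pexpr R.

Definition plie_g i j :=
  psum4 (fun k => padd (padd (pmul (V k) (pderiv k (G i j)))
                             (pmul (G k j) (pderiv i (V k))))
                       (pmul (G i k) (pderiv j (V k)))).

Lemma lie_g_peval i j x : lie_g (fun k => peval (V k)) g i j x = peval (plie_g i j) x.
Proof.
rewrite /lie_g /plie_g peval_psum4; apply: eq_bigr => k _.
by rewrite !peval_padd !peval_pmul !gE !pd_peval.
Qed.

End PolynomialMetric.

Section Soliton.
Variables (R : realType) (a b p q s lambda : R).

Definition pH : pexpr R :=
  PAdd (PAdd (PAdd
    (PMul (PCoord ix4) (PAdd (PMul (PConst a) (PMul (PCoord ix2) (PCoord ix2)))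
                             (PMul (PConst b) (PMul (PCoord ix3) (PCoord ix3)))))
    (PMul (PConst p) (PMul (PCoord ix2) (PCoord ix2))))
    (PMul (PMul (PMul (PConst 2) (PConst q)) (PCoord ix2)) (PCoord ix3)))
    (PMul (PConst s) (PMul (PCoord ix3) (PCoord ix3))).

Definition pgmet (i j : 'I_4) : pexpr R :=
  if eqn i 0 && eqn j 3 then POne
  else if eqn i 3 && eqn j 0 then POne
  else if eqn i 1 && eqn j 1 then POne
  else if eqn i 2 && eqn j 2 then POne
  else if eqn i 3 && eqn j 3 then pH
  else PZero.

Definition pgmet_inv (i j : 'I_4) : pexpr R :=
  if eqn i 0 && eqn j 0 then POpp pH
  else if eqn i 0 && eqn j 3 then POne
  else if eqn i 3 && eqn j 0 then POne
  else if eqn i 1 && eqn j 1 then POne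
  else if eqn i 2 && eqn j 2 then POne
  else PZero.

Lemma gmet_peval i j : gmet a b p q s i j = peval (pgmet i j).
Proof.
have peval_pH : Hfun a b p q s = peval pH.
  have [e4 e3 e2] : [/\ 3 = ix4, 2 = ix3 & 1 = ix2] by split; apply/val_inj.
  by apply/funext => x; rewrite /Hfun /= e4 e3 e2; ring.
by apply/funext => x; rewrite /gmet /pgmet; repeat case: ifP => _ //=; rewrite peval_pH.
Qed.

Lemma mul_pgmet_pgmet_inv x :
  \matrix_(i, j) peval (pgmet i j) x *m \matrix_(i, j) peval (pgmet_inv i j) x = 1%:M.
Proof.
apply/matrixP => i j; rewrite !mxE !big_ord_recr big_ord0 /= !mxE.
by case: i => [[|[|[|[|//]]]] ?]; case: j => [[|[|[|[|//]]]] ?];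
  rewrite /pgmet /pgmet_inv /=; ring.
Qed.

Definition soliton_field (k : 'I_4) : pexpr R :=
  if eqn k 0 then
    PAdd (PAdd (PMul (PConst lambda) (PCoord ix1))
               (PMul (PConst ((a + b) / 4)) (PMul (PCoord ix4) (PCoord ix4))))
         (PMul (PConst ((p + s) / 2)) (PCoord ix4))
  else if eqn k 1 then PMul (PConst (lambda / 2)) (PCoord ix2)
  else if eqn k 2 then PMul (PConst (lambda / 2)) (PCoord ix3)
  else PZero.

Let half_laplacian_H x := (a + b) * Defs.coord ix4 x + (p + s).

Lemma ricci_gmet i j x :
  ricci (gmet a b p q s) i j x = if eqn i 3 && eqn j 3 then - half_laplacian_H x else 0.
Proof.
rewrite (ricci_peval gmet_peval mul_pgmet_pgmet_inv) /half_laplacian_H.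
case: i => [[|[|[|[|//]]]] ?]; case: j => [[|[|[|[|//]]]] ?];
cbv beta iota zeta delta [pricci priem pchristoffel psum4 pgmet_inv pgmet pH
  pderiv padd pmul popp ix1 ix2 ix3 ix4 nat_of_ord eqn andb peval];
by field; rewrite ?pnatr_eq0.
Qed.

Lemma lie_g_soliton_field i j x :
  lie_g (fun k => peval (soliton_field k)) (gmet a b p q s) i j x
  = lambda * gmet a b p q s i j x + if eqn i 3 && eqn j 3 then half_laplacian_H x else 0.
Proof.
rewrite (lie_g_peval gmet_peval) gmet_peval /half_laplacian_H.
case: i => [[|[|[|[|//]]]] ?]; case: j => [[|[|[|[|//]]]] ?];
cbv beta iota zeta delta [plie_g soliton_field psum4 pgmet pH
  pderiv padd pmul popp ix1 ix2 ix3 ix4 nat_of_ord eqn andb peval];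
by field; rewrite ?pnatr_eq0.
Qed.

End Soliton.

Theorem mainTheorem5 (R : realType) (U : set 'rV[R]_4) (hU : open U)
  (a b p q s : R) (hab : a ^+ 2 + b ^+ 2 != 0) (lambda : R) :
  exists V : vfield R,
    (forall k : 'I_4, smooth_on U (V k)) /\
    (forall (i j : 'I_4) (x : 'rV[R]_4), U x ->
       lie_g V (gmet a b p q s) i j x + ricci (gmet a b p q s) i j x
       = lambda * gmet a b p q s i j x).
Proof.
exists (fun k => peval (soliton_field a b p s lambda k)).
split => [k | i j x _]; first exact: smooth_on_peval.
by rewrite lie_g_soliton_field ricci_gmet; case: ifP => _; ring.
Qed.
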